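(* Let $\alpha\in\ell^2$ and $\epsilon>0$, and suppose that the $(\epsilon,L)$-sequence associated with $\alpha$ and $\epsilon$ has finite length $N$. Then $a_{2N+2}(R_\alpha)\le\epsilon/\sqrt2$.
   Context: $\mathbb{N}=\{0,1,2,\dots\}$; $\ell^2$ is the space of square-summable functions $\mathbb{N}\to\mathbb{C}$; $(R_\alpha f)(k)=\alpha_k\sum_{j=0}^kf(j)$. Approximation numbers: $a_{n+1}(T)=\inf\{\|T-P\|:P$ linear on $\ell^2$ with rank $\le n\}$, $\|\cdot\|$ the operator norm. For a finite natural interval $I$: $\mu(I)=\sum_{k\in I}|\alpha_k|^2$, $\|f\|_{2,I}=(\sum_{k\in I}|f(k)|^2)^{1/2}$, $l(I,f)=\sum_{k\in I}\sum_{n\in I\setminus\{k\}}|\alpha_k\alpha_n\sum_{j=\min(k,n)+1}^{\max(k,n)}f(j)|^2$, $L(I)=(\sup_{\|f\|_{2,I}\le1}l(I,f)/\mu(I))^{1/2}$ (sup over $f$ supported in $I$; $L(I)=0$ if $\alpha$ vanishes on $I$). $(\epsilon,L)$-sequence: $c_0=0$ and $c_{k+1}=\inf\{t\in\mathbb{N}:t>c_k,\ L([c_k,t-1])>\epsilon\}$ (with $\inf\emptyset=+\infty$). It has finite length $N$ if $c_N<\infty$ and $c_{N+1}=+\infty$. *)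

From Stdlib Require Import Reals List.
From Coquelicot Require Import Coquelicot.
Import ListNotations.
Open Scope R_scope.

Definition rsum (a b : nat) (g : nat -> R) : R :=
  fold_right Rplus 0 (map g (seq a (S b - a))).
Definition csum (a b : nat) (g : nat -> C) : C :=
  fold_right Cplus (RtoC 0) (map g (seq a (S b - a))).

Definition ell2 (f : nat -> C) : Prop := ex_series (fun k => (Cmod (f k)) ^ 2).
Definition norm2 (f : nat -> C) : R := sqrt (Series (fun k => (Cmod (f k)) ^ 2)).

Definition R_op (alpha : nat -> C) (f : nat -> C) : nat -> C :=
  fun k => Cmult (alpha k) (csum 0 k f).

Definition opnorm (T : (nat -> C) -> (nat -> C)) : Rbar :=
  Lub_Rbar (fun r => exists f, ell2 f /\ norm2 f <= 1 /\ r = norm2 (T f)).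

Definition op_sub (T P : (nat -> C) -> (nat -> C)) : (nat -> C) -> (nat -> C) :=
  fun f k => Cminus (T f k) (P f k).

Definition linear_l2 (P : (nat -> C) -> (nat -> C)) : Prop :=
  (forall f, ell2 f -> ell2 (P f)) /\
  (forall f g, ell2 f -> ell2 g ->
     forall k, P (fun j => Cplus (f j) (g j)) k = Cplus (P f k) (P g k)) /\
  (forall (c : C) f, ell2 f -> forall k, P (fun j => Cmult c (f j)) k = Cmult c (P f k)).

Definition rank_le (P : (nat -> C) -> (nat -> C)) (n : nat) : Prop :=
  exists v : nat -> (nat -> C),
    (forall i, (i < n)%nat -> ell2 (v i)) /\
    forall f, ell2 f -> exists c : nat -> C,
      forall k, P f k = csum 0 (pred n) (fun i => if Nat.ltb i n then Cmult (c i) (v i k) else RtoC 0).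

(* approximation number a_m(T) = inf { ||T - P|| : P linear on l^2, rank P <= m-1 }, m >= 1 *)
Definition approx_num (T : (nat -> C) -> (nat -> C)) (m : nat) : Rbar :=
  Glb_Rbar (fun r => exists P, linear_l2 P /\ rank_le P (pred m) /\
                              opnorm (op_sub T P) = Finite r).

Definition mu (alpha : nat -> C) (a b : nat) : R := rsum a b (fun k => (Cmod (alpha k)) ^ 2).

Definition norm2I (a b : nat) (f : nat -> C) : R := sqrt (rsum a b (fun k => (Cmod (f k)) ^ 2)).

Definition supported_in (a b : nat) (f : nat -> C) : Prop :=
  forall j, (j < a \/ b < j)%nat -> f j = RtoC 0.

Definition l_I (alpha : nat -> C) (a b : nat) (f : nat -> C) : R :=
  rsum a b (fun k => rsum a b (fun n =>
    if Nat.eqb n k then 0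
    else (Cmod (Cmult (Cmult (alpha k) (alpha n))
                      (csum (S (Nat.min k n)) (Nat.max k n) f))) ^ 2)).

(* L(I); the supremum is over a bounded set (finite-dimensional quadratic form), hence finite *)
Definition L_I (alpha : nat -> C) (a b : nat) : R :=
  if Req_EM_T (mu alpha a b) 0 then 0
  else sqrt (real (Lub_Rbar (fun r => exists f, supported_in a b f /\ norm2I a b f <= 1 /\
                                           r = l_I alpha a b f / mu alpha a b))).

(* The (eps,L)-sequence c_0 = 0, c_{k+1} = inf{t > c_k : L([c_k, t-1]) > eps}
   has finite length N : c_0, ..., c_N are finite and c_{N+1} = +oo. *)
Definition epsL_finite_length (alpha : nat -> C) (eps : R) (N : nat) : Prop :=
  exists c : nat -> nat,
    c 0%nat = 0%nat /\
    (forall k, (k < N)%nat ->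
       (c k < c (S k))%nat /\ L_I alpha (c k) (c (S k) - 1) > eps /\
       forall t, (c k < t < c (S k))%nat -> ~ (L_I alpha (c k) (t - 1) > eps)) /\
    (forall t, (c N < t)%nat -> ~ (L_I alpha (c N) (t - 1) > eps)).

(* Split [0, oo) into the blocks [c j, c (j+1) - 1] (j < N) and the tail [c N, oo).
   On a window I = [a, b], with weights |alpha k|^2 and partial sums S k = f a + ... + f k,
   l(I, f) is 2 mu(I) times the weighted variance of S over I.  So where L(I) <= eps,
   replacing S k by its weighted mean over I (a linear functional of f) changes
   (R_alpha f)(k), k in I, by at most eps^2/2 ||f||_I^2 in squared l^2 norm.  By
   minimality of c (j+1), L <= eps on each block without its last point, where R_alpha f
   is kept exactly; on the tail, L <= eps on every finite window, and the weighted means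
   of these windows converge.  The resulting operator is alpha times a linear functional
   of f on each of the 2N+1 pieces, so it has rank <= 2N+1 and approximates R_alpha
   within eps/sqrt 2. *)

From Stdlib Require Import Reals List Arith Lia Lra Psatz Classical.
From Coquelicot Require Import Coquelicot.
Open Scope R_scope.

Lemma fold_right_map_iter {G : AbelianMonoid} (l : list nat) (u : nat -> G) :
  fold_right plus zero (map u l) = Iter.iter plus zero l u.
Proof. induction l as [|x l IH]; simpl; [reflexivity | now rewrite IH]. Qed.

Lemma rsum_sum_n_m (a b : nat) (u : nat -> R) : rsum a b u = sum_n_m u a b.
Proof. exact (fold_right_map_iter (G := R_AbelianMonoid) _ u). Qed.

Lemma csum_sum_n_m (a b : nat) (f : nat -> C) : csum a b f = sum_n_m f a b.
Proof. exact (fold_right_map_iter (G := C_AbelianMonoid) _ f). Qed.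

Lemma rsum_sum_n (u : nat -> R) (n : nat) : rsum 0 n u = sum_n u n.
Proof. apply rsum_sum_n_m. Qed.

Section RealSums.
Implicit Types (u v : nat -> R) (a b : nat).

Lemma rsum_ext u v a b :
  (forall k, (a <= k <= b)%nat -> u k = v k) -> rsum a b u = rsum a b v.
Proof. rewrite !rsum_sum_n_m; apply sum_n_m_ext_loc. Qed.

Lemma rsum_plus u v a b : rsum a b (fun k => u k + v k) = rsum a b u + rsum a b v.
Proof. rewrite !rsum_sum_n_m; exact (sum_n_m_plus u v a b). Qed.

Lemma rsum_scal_l (c : R) u a b : rsum a b (fun k => c * u k) = c * rsum a b u.
Proof. rewrite !rsum_sum_n_m; exact (sum_n_m_mult_l c u a b). Qed.

Lemma rsum_const (c : R) a b : rsum a b (fun _ => c) = INR (S b - a) * c.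
Proof. rewrite rsum_sum_n_m; apply sum_n_m_const. Qed.

Lemma rsum_empty u a b : (b < a)%nat -> rsum a b u = 0.
Proof. intros Hba; rewrite rsum_sum_n_m; exact (sum_n_m_zero u a b Hba). Qed.

Lemma rsum_split u a m b : (a <= S m)%nat -> (m <= b)%nat ->
  rsum a b u = rsum a m u + rsum (S m) b u.
Proof. intros Ham Hmb; rewrite !rsum_sum_n_m; exact (sum_n_m_Chasles u a m b Ham Hmb). Qed.

Lemma rsum_le u v a b :
  (forall k, (a <= k <= b)%nat -> u k <= v k) -> rsum a b u <= rsum a b v.
Proof.
  intros Huv.
  rewrite (rsum_ext u (fun k => if andb (a <=? k) (k <=? b) then u k else v k)).
  - rewrite !rsum_sum_n_m; apply sum_n_m_le; intros k.
    destruct (a <=? k) eqn:Ha, (k <=? b) eqn:Hb; simpl; try lra.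
    apply Huv; split; now apply Nat.leb_le.
  - intros k [Ha Hb]; apply Nat.leb_le in Ha, Hb; now rewrite Ha, Hb.
Qed.

Lemma rsum_nonneg u a b : (forall k, (a <= k <= b)%nat -> 0 <= u k) -> 0 <= rsum a b u.
Proof.
  intros Hu; replace 0 with (rsum a b (fun _ => 0)) by (rewrite rsum_const; ring).
  now apply rsum_le.
Qed.

Lemma rsum_le_r u a b b' : (forall k, (S b <= k <= b')%nat -> 0 <= u k) -> (b <= b')%nat ->
  rsum a b u <= rsum a b' u.
Proof.
  intros Hu Hb; destruct (le_lt_dec a (S b)).
  - rewrite (rsum_split u a b b') by lia.
    pose proof (rsum_nonneg u (S b) b' Hu); lra.
  - rewrite (rsum_empty u a b) by lia. apply rsum_nonneg; intros; apply Hu; lia.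
Qed.

Lemma rsum_single u a : rsum a a u = u a.
Proof. rewrite rsum_sum_n_m; apply sum_n_n. Qed.

Lemma rsum_term_le u a b k : (forall j, (a <= j <= b)%nat -> 0 <= u j) -> (a <= k <= b)%nat ->
  u k <= rsum a b u.
Proof.
  intros Hu Hk.
  assert (Hkb : rsum k b u = u k + rsum (S k) b u)
    by (rewrite (rsum_split u k k b), rsum_single by lia; reflexivity).
  assert (0 <= rsum (S k) b u) by (apply rsum_nonneg; intros; apply Hu; lia).
  destruct (Nat.eq_dec a k) as [<-|Hak]; [lra|].
  rewrite (rsum_split u a (pred k) b) by lia; replace (S (pred k)) with k by lia.
  assert (0 <= rsum a (pred k) u) by (apply rsum_nonneg; intros; apply Hu; lia).
  lra.
Qed.

Lemma rsum_nonneg_eq0 u a b k : (forall j, (a <= j <= b)%nat -> 0 <= u j) ->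
  rsum a b u = 0 -> (a <= k <= b)%nat -> u k = 0.
Proof.
  intros Hu H0 Hk; pose proof (rsum_term_le u a b k Hu Hk); pose proof (Hu k Hk); lra.
Qed.

Lemma rsum_shift u a n : rsum a (a + n) u = sum_n (fun i => u (a + i)%nat) n.
Proof.
  induction n as [|n IH].
  - now rewrite Nat.add_0_r, rsum_single, sum_O, Nat.add_0_r.
  - rewrite sum_Sn, <- IH, (rsum_split u a (a + n) (a + S n)), Nat.add_succ_r, rsum_single
      by lia.
    reflexivity.
Qed.

Lemma rsum_le_Series u a b : (forall k, (a <= k)%nat -> 0 <= u k) ->
  ex_series (fun n => u (a + n)%nat) -> rsum a b u <= Series (fun n => u (a + n)%nat).
Proof.
  intros Hu Hs.
  assert (Hpartial : forall n, sum_n (fun i => u (a + i)%nat) n <= Series (fun n => u (a + n)%nat)).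
  { apply is_lim_seq_incr_compare; [apply Series_correct, Hs|].
    intros n; rewrite sum_Sn.
    assert (0 <= u (a + S n)%nat) by (apply Hu; lia).
    unfold plus; simpl; lra. }
  destruct (le_lt_dec a b).
  - replace b with (a + (b - a))%nat by lia; rewrite rsum_shift; apply Hpartial.
  - rewrite rsum_empty by lia. specialize (Hpartial 0%nat); rewrite sum_O in Hpartial.
    assert (0 <= u (a + 0)%nat) by (apply Hu; lia); lra.
Qed.

End RealSums.

Section ComplexSums.
Implicit Types (f g : nat -> C) (a b : nat).

Lemma csum_ext f g a b :
  (forall k, (a <= k <= b)%nat -> f k = g k) -> csum a b f = csum a b g.
Proof. rewrite !csum_sum_n_m; apply sum_n_m_ext_loc. Qed.

Lemma csum_plus f g a b : csum a b (fun k => f k + g k)%C = (csum a b f + csum a b g)%C.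
Proof. rewrite !csum_sum_n_m; exact (sum_n_m_plus f g a b). Qed.

Lemma csum_scal (z : C) f a b : csum a b (fun k => z * f k)%C = (z * csum a b f)%C.
Proof. rewrite !csum_sum_n_m; exact (@sum_n_m_mult_l C_Ring z f a b). Qed.

Lemma csum_split f a m b : (a <= S m)%nat -> (m <= b)%nat ->
  csum a b f = (csum a m f + csum (S m) b f)%C.
Proof. intros Ham Hmb; rewrite !csum_sum_n_m; exact (sum_n_m_Chasles f a m b Ham Hmb). Qed.

Lemma Re_csum f a b : Re (csum a b f) = rsum a b (fun k => Re (f k)).
Proof.
  unfold csum, rsum; induction (seq a (S b - a)) as [|x l IH]; cbn [fold_right map]; [reflexivity|].
  now rewrite re_plus, IH.
Qed.

Lemma Im_csum f a b : Im (csum a b f) = rsum a b (fun k => Im (f k)).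
Proof.
  unfold csum, rsum; induction (seq a (S b - a)) as [|x l IH]; cbn [fold_right map]; [reflexivity|].
  now rewrite im_plus, IH.
Qed.

Lemma Cmod_csum_le f a b : Cmod (csum a b f) <= rsum a b (fun k => Cmod (f k)).
Proof. rewrite csum_sum_n_m, rsum_sum_n_m; apply (norm_sum_n_m (V := C_NormedModule)). Qed.

Lemma csum_single f a : csum a a f = f a.
Proof. rewrite csum_sum_n_m; apply sum_n_n. Qed.

Lemma csum_zero a b : csum a b (fun _ => RtoC 0) = RtoC 0.
Proof. rewrite csum_sum_n_m; exact (@sum_n_m_const_zero C_AbelianMonoid a b). Qed.

Lemma csum_indicator n p (x : C) : (p <= n)%nat ->
  csum 0 n (fun i => if i =? p then x else RtoC 0) = x.
Proof.
  induction n as [|n IH]; intros Hp.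
  - replace p with 0%nat by lia; apply csum_single.
  - rewrite (csum_split _ 0 n (S n)), csum_single by lia.
    destruct (Nat.eqb_spec (S n) p) as [<-|Hne].
    + rewrite (csum_ext _ (fun _ => RtoC 0)), csum_zero; [ring|].
      intros i Hi; destruct (Nat.eqb_spec i (S n)); [lia | reflexivity].
    + rewrite IH by lia; ring.
Qed.

End ComplexSums.

(* Sums over [j < n]; [csum 0 (n - 1)] would not be empty at [n = 0]. *)
Definition csum_lt (f : nat -> C) (n : nat) : C :=
  match n with O => RtoC 0 | S m => csum 0 m f end.

Definition rsum_lt (u : nat -> R) (n : nat) : R :=
  match n with O => 0 | S m => rsum 0 m u end.

Lemma csum_lt_split f a k : (a <= S k)%nat -> csum 0 k f = (csum_lt f a + csum a k f)%C.
Proof.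
  intros Hak; destruct a as [|a]; simpl; [ring|].
  apply csum_split; lia.
Qed.

Lemma rsum_lt_split u a b : (a <= S b)%nat -> rsum_lt u (S b) = rsum_lt u a + rsum a b u.
Proof.
  intros Hab; destruct a as [|a]; simpl; [ring|].
  apply rsum_split; lia.
Qed.

Lemma csum_lt_plus f g n : csum_lt (fun j => f j + g j)%C n = (csum_lt f n + csum_lt g n)%C.
Proof. destruct n; simpl; [ring | apply csum_plus]. Qed.

Lemma csum_lt_scal (z : C) f n : csum_lt (fun j => z * f j)%C n = (z * csum_lt f n)%C.
Proof. destruct n; simpl; [ring | apply csum_scal]. Qed.

Lemma ex_series_nonneg_bounded (u : nat -> R) (D : R) :
  (forall n, 0 <= u n) -> (forall n, sum_n u n <= D) -> ex_series u.
Proof.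
  intros Hu HD; destruct (ex_finite_lim_seq_incr (sum_n u) D) as [l Hl]; [|exact HD|now exists l].
  intros n; rewrite sum_Sn; pose proof (Hu (S n)); unfold plus; simpl; lra.
Qed.

Lemma Series_le_bound (u : nat -> R) (D : R) :
  (forall n, 0 <= u n) -> (forall n, sum_n u n <= D) -> Series u <= D.
Proof.
  intros Hu HD.
  assert (Hle : Rbar_le (Series u) D).
  { apply (is_lim_seq_le (sum_n u) (fun _ => D)); [exact HD| |apply is_lim_seq_const].
    apply Series_correct, (ex_series_nonneg_bounded u D Hu HD). }
  exact Hle.
Qed.

Lemma Series_nonneg (u : nat -> R) : (forall n, 0 <= u n) -> ex_series u -> 0 <= Series u.
Proof.
  intros Hu Hs; pose proof (rsum_le_Series u 0 0 (fun k _ => Hu k) Hs) as H0.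
  rewrite rsum_single in H0; exact (Rle_trans _ _ _ (Hu 0%nat) H0).
Qed.

Lemma rsum_lt_add_Series (u : nat -> R) (a : nat) : ex_series u ->
  rsum_lt u a + Series (fun n => u (a + n)%nat) = Series u.
Proof.
  intros Hs; destruct a as [|a]; simpl.
  - rewrite Rplus_0_l; apply Series_ext; reflexivity.
  - rewrite (Series_incr_n u (S a)) by (lia || exact Hs); simpl.
    now rewrite rsum_sum_n, sum_n_Reals.
Qed.

Lemma Series_lin2 (u v : nat -> R) (p q : R) : ex_series u -> ex_series v ->
  Series (fun n => p * u n + q * v n) = p * Series u + q * Series v.
Proof.
  intros Hu Hv; rewrite Series_plus, !Series_scal_l;
    [reflexivity | exact (ex_series_scal_l p u Hu) | exact (ex_series_scal_l q v Hv)].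
Qed.

(** * Weighted means and variances *)

Lemma Cmod_sq_sub (x y : C) : Cmod (x - y) ^ 2 = (Re x - Re y) ^ 2 + (Im x - Im y) ^ 2.
Proof. rewrite Cmod2_alt; unfold Cminus; now rewrite re_plus, im_plus, re_opp, im_opp. Qed.

Lemma Cmod_sub_sym (x y : C) : Cmod (x - y) = Cmod (y - x).
Proof. replace (x - y)%C with (- (y - x))%C by ring; apply Cmod_opp. Qed.

Lemma Cmod_mult_sq (x y : C) : Cmod (x * y) ^ 2 = Cmod x ^ 2 * Cmod y ^ 2.
Proof. rewrite Cmod_mult; ring. Qed.

Lemma Cmod_sq_le_sub (x y : C) : Cmod y ^ 2 <= 2 * Cmod x ^ 2 + 2 * Cmod (x - y) ^ 2.
Proof.
  rewrite Cmod_sq_sub, !Cmod2_alt.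
  pose proof (pow2_ge_0 (2 * Re x - Re y)); pose proof (pow2_ge_0 (2 * Im x - Im y)); nra.
Qed.

Lemma Rabs_Re_le (z : C) : Rabs (Re z) <= 1 + Cmod z ^ 2.
Proof.
  rewrite Cmod2_alt; pose proof (pow2_ge_0 (Im z)).
  destruct (Rle_dec 0 (Re z)); [rewrite Rabs_right by lra | rewrite Rabs_left by lra]; nra.
Qed.

Lemma Rabs_Im_le (z : C) : Rabs (Im z) <= 1 + Cmod z ^ 2.
Proof.
  rewrite Cmod2_alt; pose proof (pow2_ge_0 (Re z)).
  destruct (Rle_dec 0 (Im z)); [rewrite Rabs_right by lra | rewrite Rabs_left by lra]; nra.
Qed.

Definition wmoment (w : nat -> R) (s : nat -> C) (a b : nat) : C :=
  csum a b (fun k => RtoC (w k) * s k)%C.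

(* Junk if the weights sum to [0]; every weighted quantity built from it then vanishes. *)
Definition wmean (w : nat -> R) (s : nat -> C) (a b : nat) : C :=
  (RtoC (/ rsum a b w) * wmoment w s a b)%C.

Section WeightedVariance.
Variables (w : nat -> R) (s : nat -> C) (a b : nat).

Lemma Re_wmoment : Re (wmoment w s a b) = rsum a b (fun k => w k * Re (s k)).
Proof. unfold wmoment; rewrite Re_csum; apply rsum_ext; intros; apply re_scal_l. Qed.

Lemma Im_wmoment : Im (wmoment w s a b) = rsum a b (fun k => w k * Im (s k)).
Proof. unfold wmoment; rewrite Im_csum; apply rsum_ext; intros; apply im_scal_l. Qed.

Lemma rsum_wdist_expand (z : C) :
  rsum a b (fun k => w k * Cmod (s k - z) ^ 2) =
  rsum a b (fun k => w k * Cmod (s k) ^ 2)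
  - 2 * (Re z * Re (wmoment w s a b) + Im z * Im (wmoment w s a b))
  + Cmod z ^ 2 * rsum a b w.
Proof.
  rewrite Re_wmoment, Im_wmoment.
  rewrite (rsum_ext _ (fun k => w k * Cmod (s k) ^ 2 + (-2 * Re z) * (w k * Re (s k))
                                 + (-2 * Im z) * (w k * Im (s k)) + Cmod z ^ 2 * w k)).
  - rewrite !rsum_plus, !rsum_scal_l; ring.
  - intros k _; rewrite Cmod_sq_sub, !Cmod2_alt; ring.
Qed.

Hypothesis mass_neq0 : rsum a b w <> 0.

Lemma rsum_wdist_wmean (z : C) :
  rsum a b (fun k => w k * Cmod (s k - z) ^ 2) =
  rsum a b (fun k => w k * Cmod (s k - wmean w s a b) ^ 2)
  + rsum a b w * Cmod (wmean w s a b - z) ^ 2.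
Proof.
  rewrite !rsum_wdist_expand, Cmod_sq_sub, !Cmod2_alt; unfold wmean.
  rewrite re_scal_l, im_scal_l; field; exact mass_neq0.
Qed.

Lemma rsum_pairwise_wdist :
  rsum a b (fun k => rsum a b (fun n => w k * w n * Cmod (s k - s n) ^ 2)) =
  2 * rsum a b w * rsum a b (fun k => w k * Cmod (s k - wmean w s a b) ^ 2).
Proof.
  set (Q := rsum a b (fun k => w k * Cmod (s k) ^ 2)).
  rewrite (rsum_ext _ (fun k => Q * w k + (-2 * Re (wmoment w s a b)) * (w k * Re (s k))
                                 + (-2 * Im (wmoment w s a b)) * (w k * Im (s k))
                                 + rsum a b w * (w k * Cmod (s k) ^ 2))).
  - rewrite !rsum_plus, !rsum_scal_l, <- Re_wmoment, <- Im_wmoment, rsum_wdist_expand.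
    fold Q; rewrite Cmod2_alt; unfold wmean; rewrite re_scal_l, im_scal_l.
    field; exact mass_neq0.
  - intros k _.
    rewrite (rsum_ext _ (fun n => w k * (w n * Cmod (s n - s k) ^ 2)))
      by (intros; rewrite Cmod_sub_sym; ring).
    rewrite rsum_scal_l, rsum_wdist_expand, Cmod2_alt; fold Q; ring.
Qed.

End WeightedVariance.

Definition weight (alpha : nat -> C) (k : nat) : R := Cmod (alpha k) ^ 2.

Lemma weight_nonneg alpha k : 0 <= weight alpha k.
Proof. apply pow2_ge_0. Qed.

Section PairwiseSpread.
Variables (alpha : nat -> C) (a b : nat).

Lemma l_I_pairwise f :
  l_I alpha a b f = rsum a b (fun k => rsum a b (fun n =>
    weight alpha k * weight alpha n * Cmod (csum a k f - csum a n f) ^ 2)).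
Proof.
  unfold l_I; apply rsum_ext; intros k Hk; apply rsum_ext; intros n Hn.
  destruct (Nat.eqb_spec n k) as [->|Hnk].
  - replace (csum a k f - csum a k f)%C with (RtoC 0) by ring; rewrite Cmod_0; ring.
  - rewrite !Cmod_mult_sq; unfold weight; f_equal.
    destruct (le_lt_dec k n).
    + rewrite Nat.min_l, Nat.max_r, (csum_split f a k n) by lia.
      replace (csum a k f - (csum a k f + csum (S k) n f))%C with (- csum (S k) n f)%C by ring.
      now rewrite Cmod_opp.
    + rewrite Nat.min_r, Nat.max_l, (csum_split f a n k) by lia.
      now replace (csum a n f + csum (S n) k f - csum a n f)%C with (csum (S n) k f) by ring.
Qed.

Lemma l_I_nonneg f : 0 <= l_I alpha a b f.
Proof.
  rewrite l_I_pairwise; apply rsum_nonneg; intros k _; apply rsum_nonneg; intros n _.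
  pose proof (weight_nonneg alpha k); pose proof (weight_nonneg alpha n).
  pose proof (pow2_ge_0 (Cmod (csum a k f - csum a n f))).
  apply Rmult_le_pos; [apply Rmult_le_pos|]; assumption.
Qed.

Lemma l_I_ext_in f g : (forall j, (a <= j <= b)%nat -> f j = g j) ->
  l_I alpha a b f = l_I alpha a b g.
Proof.
  intros Hfg; rewrite !l_I_pairwise; apply rsum_ext; intros k Hk; apply rsum_ext; intros n Hn.
  rewrite (csum_ext f g a k), (csum_ext f g a n) by (intros; apply Hfg; lia).
  reflexivity.
Qed.

Lemma l_I_scal (r : R) f : l_I alpha a b (fun j => RtoC r * f j)%C = r ^ 2 * l_I alpha a b f.
Proof.
  rewrite !l_I_pairwise, <- rsum_scal_l; apply rsum_ext; intros k _.
  rewrite <- rsum_scal_l; apply rsum_ext; intros n _.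
  rewrite !csum_scal.
  replace (r * csum a k f - r * csum a n f)%C with (r * (csum a k f - csum a n f))%C by ring.
  rewrite Cmod_mult_sq, Cmod_R, pow2_abs; ring.
Qed.

Lemma l_I_bounded g : (forall j, (a <= j <= b)%nat -> Cmod (g j) <= 1) ->
  l_I alpha a b g <= (2 * INR (S b)) ^ 2 * mu alpha a b ^ 2.
Proof.
  intros Hg; set (B := 2 * INR (S b)).
  assert (Hpartial : forall k, (k <= b)%nat -> Cmod (csum a k g) <= INR (S b)).
  { intros k Hk; eapply Rle_trans; [apply Cmod_csum_le|].
    eapply Rle_trans; [apply (rsum_le _ (fun _ => 1)); intros; apply Hg; lia|].
    rewrite rsum_const, Rmult_1_r; apply le_INR; lia. }
  rewrite l_I_pairwise.
  apply Rle_trans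
    with (rsum a b (fun k => rsum a b (fun n => B ^ 2 * weight alpha k * weight alpha n))).
  - apply rsum_le; intros k Hk; apply rsum_le; intros n Hn.
    assert (Hd : Cmod (csum a k g - csum a n g) <= B).
    { unfold Cminus; eapply Rle_trans; [apply Cmod_triangle|]; rewrite Cmod_opp.
      pose proof (Hpartial k ltac:(lia)); pose proof (Hpartial n ltac:(lia)); unfold B; lra. }
    pose proof (Cmod_ge_0 (csum a k g - csum a n g)).
    pose proof (weight_nonneg alpha k); pose proof (weight_nonneg alpha n).
    assert (Cmod (csum a k g - csum a n g) ^ 2 <= B ^ 2) by (apply pow_incr; lra).
    replace (B ^ 2 * weight alpha k * weight alpha n)
      with (weight alpha k * weight alpha n * B ^ 2) by ring.
    apply Rmult_le_compat_l; [apply Rmult_le_pos|]; assumption.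
  - rewrite (rsum_ext _ (fun k => mu alpha a b * (B ^ 2 * weight alpha k)))
      by (intros; rewrite rsum_scal_l; unfold mu, weight; ring).
    rewrite !rsum_scal_l; change (rsum a b (weight alpha)) with (mu alpha a b); lra.
Qed.

End PairwiseSpread.

Lemma mu_nonneg alpha a b : 0 <= mu alpha a b.
Proof. apply rsum_nonneg; intros; apply pow2_ge_0. Qed.

Lemma L_I_nonneg alpha a b : 0 <= L_I alpha a b.
Proof. unfold L_I; destruct (Req_EM_T (mu alpha a b) 0); [lra | apply sqrt_pos]. Qed.

Lemma Cmod_le1_of_norm2I_le1 a b g j : norm2I a b g <= 1 -> (a <= j <= b)%nat ->
  Cmod (g j) <= 1.
Proof.
  intros Hg Hj; unfold norm2I in Hg.
  assert (Hsum : rsum a b (fun k => Cmod (g k) ^ 2) <= 1).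
  { destruct (Rle_dec (rsum a b (fun k => Cmod (g k) ^ 2)) 1) as [|Hgt]; [assumption|].
    apply Rnot_le_lt in Hgt; rewrite <- sqrt_1 in Hg.
    pose proof (sqrt_lt_1_alt 1 _ (conj Rle_0_1 Hgt)); lra. }
  assert (Cmod (g j) ^ 2 <= 1) by
    (eapply Rle_trans; [apply (rsum_term_le (fun k => Cmod (g k) ^ 2) a b)|exact Hsum];
     [intros; apply pow2_ge_0|exact Hj]).
  pose proof (Cmod_ge_0 (g j)); nra.
Qed.

Lemma l_I_div_mu_le_L_I alpha a b g : mu alpha a b <> 0 -> supported_in a b g ->
  norm2I a b g <= 1 -> l_I alpha a b g / mu alpha a b <= L_I alpha a b ^ 2.
Proof.
  intros Hmu Hsupp Hnorm.
  assert (Hmu_pos : 0 < mu alpha a b) by (pose proof (mu_nonneg alpha a b); lra).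
  unfold L_I; destruct (Req_EM_T (mu alpha a b) 0) as [|_]; [contradiction|].
  match goal with |- context [Lub_Rbar ?E] => set (Eset := E) end.
  destruct (Lub_Rbar_correct Eset) as [Hub Hleast].
  assert (Hmem : Eset (l_I alpha a b g / mu alpha a b)) by (exists g; auto).
  (* The supremum must be shown finite: [real] sends [p_infty] to [0]. *)
  assert (Hbounded : is_ub_Rbar Eset ((2 * INR (S b)) ^ 2 * mu alpha a b)).
  { intros r [h [_ [Hh ->]]]; cbn [Rbar_le].
    apply Rmult_le_reg_r with (mu alpha a b); [lra|].
    unfold Rdiv; rewrite Rmult_assoc, Rinv_l, Rmult_1_r by lra.
    replace ((2 * INR (S b)) ^ 2 * mu alpha a b * mu alpha a b)
      with ((2 * INR (S b)) ^ 2 * mu alpha a b ^ 2) by ring.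
    apply l_I_bounded; intros j Hj; now apply (Cmod_le1_of_norm2I_le1 a b). }
  pose proof (Hub _ Hmem) as Hlow; pose proof (Hleast _ Hbounded) as Hup.
  destruct (Lub_Rbar Eset) as [s| |]; cbn [Rbar_le] in Hlow, Hup; try contradiction; cbn [real].
  assert (Hs : 0 <= s).
  { eapply Rle_trans; [|exact Hlow]; apply Rdiv_le_0_compat; [apply l_I_nonneg|lra]. }
  now rewrite <- Rsqr_pow2, Rsqr_sqrt.
Qed.

Lemma normalized_restriction a b f : 0 < rsum a b (fun k => Cmod (f k) ^ 2) ->
  exists g, supported_in a b g /\ norm2I a b g = 1 /\
    forall j, (a <= j <= b)%nat ->
      g j = Cmult (RtoC (/ sqrt (rsum a b (fun k => Cmod (f k) ^ 2)))) (f j).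
Proof.
  set (nu := rsum a b (fun k => Cmod (f k) ^ 2)); intros Hnu.
  assert (Hsq : sqrt nu * sqrt nu = nu) by (apply sqrt_sqrt; lra).
  assert (Ht : 0 < sqrt nu) by (apply sqrt_lt_R0; lra).
  set (t := sqrt nu) in *; clearbody t.
  exists (fun j => if andb (a <=? j) (j <=? b) then (RtoC (/ t) * f j)%C else RtoC 0).
  assert (Hin : forall j, (a <= j <= b)%nat ->
            (if andb (a <=? j) (j <=? b) then (RtoC (/ t) * f j)%C else RtoC 0)
            = (RtoC (/ t) * f j)%C).
  { intros j [Ha Hb]; apply Nat.leb_le in Ha, Hb; now rewrite Ha, Hb. }
  split; [|split; [|exact Hin]].
  - intros j [Hj|Hj].
    + now replace (a <=? j) with false by (symmetry; apply Nat.leb_gt; lia).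
    + replace (j <=? b) with false by (symmetry; apply Nat.leb_gt; lia).
      now rewrite Bool.andb_false_r.
  - unfold norm2I; rewrite <- sqrt_1; f_equal.
    rewrite (rsum_ext _ (fun k => (/ t) ^ 2 * Cmod (f k) ^ 2)).
    + rewrite rsum_scal_l; fold nu; rewrite <- Hsq; field; lra.
    + intros k Hk; rewrite Hin, Cmod_mult_sq, Cmod_R, pow2_abs by exact Hk; reflexivity.
Qed.

Lemma l_I_le_L_I alpha a b f : mu alpha a b <> 0 ->
  l_I alpha a b f <= L_I alpha a b ^ 2 * mu alpha a b * rsum a b (fun k => Cmod (f k) ^ 2).
Proof.
  intros Hmu; set (nu := rsum a b (fun k => Cmod (f k) ^ 2)).
  assert (Hmu_pos : 0 < mu alpha a b) by (pose proof (mu_nonneg alpha a b); lra).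
  assert (Hnu : 0 <= nu) by (apply rsum_nonneg; intros; apply pow2_ge_0).
  destruct (Req_dec nu 0) as [Hnu0|Hnu0].
  - assert (Hf0 : forall j, (a <= j <= b)%nat -> f j = (RtoC 0 * f j)%C).
    { intros j Hj; assert (Cmod (f j) ^ 2 = 0) by
        (exact (rsum_nonneg_eq0 _ a b j (fun k _ => pow2_ge_0 _) Hnu0 Hj)).
      assert (f j = 0) as -> by (apply Cmod_eq_0; nra); ring. }
    rewrite (l_I_ext_in _ _ _ _ _ Hf0), l_I_scal, Hnu0; lra.
  - destruct (normalized_restriction a b f ltac:(fold nu; lra)) as [g [Hsupp [Hnorm Hg]]].
    fold nu in Hg.
    pose proof (l_I_div_mu_le_L_I alpha a b g Hmu Hsupp (Req_le _ _ Hnorm)) as Hle.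
    rewrite (l_I_ext_in _ _ _ _ _ Hg), l_I_scal, pow_inv, pow2_sqrt in Hle by exact Hnu.
    apply Rmult_le_compat_r with (r := mu alpha a b * nu) in Hle; [|nra].
    replace (/ nu * l_I alpha a b f / mu alpha a b * (mu alpha a b * nu)) with (l_I alpha a b f)
      in Hle by (field; lra).
    lra.
Qed.

Definition block_mean (alpha : nat -> C) (a b : nat) (f : nat -> C) : C :=
  wmean (weight alpha) (fun k => csum a k f) a b.

Lemma block_variance_le alpha eps a b f : 0 <= eps -> L_I alpha a b <= eps ->
  rsum a b (fun k => weight alpha k * Cmod (csum a k f - block_mean alpha a b f) ^ 2)
  <= eps ^ 2 / 2 * rsum a b (fun k => Cmod (f k) ^ 2).
Proof.
  intros Heps HL.
  assert (Hnu : 0 <= rsum a b (fun k => Cmod (f k) ^ 2))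
    by (apply rsum_nonneg; intros; apply pow2_ge_0).
  destruct (Req_dec (mu alpha a b) 0) as [Hmu|Hmu].
  - rewrite (rsum_ext _ (fun _ => 0)), rsum_const; [nra|].
    intros k Hk; rewrite (rsum_nonneg_eq0 (weight alpha) a b k); auto using weight_nonneg; ring.
  - pose proof (l_I_le_L_I alpha a b f Hmu) as Hl.
    rewrite l_I_pairwise, (rsum_pairwise_wdist (weight alpha) (fun k => csum a k f)) in Hl
      by exact Hmu.
    change (rsum a b (weight alpha)) with (mu alpha a b) in Hl.
    assert (Hmu_pos : 0 < mu alpha a b) by (pose proof (mu_nonneg alpha a b); lra).
    assert (L_I alpha a b ^ 2 <= eps ^ 2)
      by (pose proof (L_I_nonneg alpha a b); apply pow_incr; lra).
    apply Rmult_le_reg_l with (2 * mu alpha a b); [lra|].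
    eapply Rle_trans; [exact Hl|].
    replace (2 * mu alpha a b * (eps ^ 2 / 2 * rsum a b (fun k => Cmod (f k) ^ 2)))
      with (eps ^ 2 * mu alpha a b * rsum a b (fun k => Cmod (f k) ^ 2)) by field.
    apply Rmult_le_compat_r; [assumption|]; apply Rmult_le_compat_r; lra.
Qed.

Lemma block_mean_plus alpha a b f g :
  block_mean alpha a b (fun j => f j + g j)%C = (block_mean alpha a b f + block_mean alpha a b g)%C.
Proof.
  unfold block_mean, wmean, wmoment.
  rewrite (csum_ext _ (fun k => RtoC (weight alpha k) * csum a k f
                                + RtoC (weight alpha k) * csum a k g)%C)
    by (intros; rewrite csum_plus; ring).
  rewrite csum_plus; ring.
Qed.

Lemma block_mean_scal alpha a b (z : C) f :
  block_mean alpha a b (fun j => z * f j)%C = (z * block_mean alpha a b f)%C.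
Proof.
  unfold block_mean, wmean, wmoment.
  rewrite (csum_ext _ (fun k => z * (RtoC (weight alpha k) * csum a k f))%C)
    by (intros; rewrite csum_scal; ring).
  rewrite csum_scal; ring.
Qed.

(** * Weighted means over a tail *)

Definition tail_wmean (w : nat -> R) (s : nat -> C) (a : nat) : C :=
  Cmult (RtoC (/ Series (fun n => w (a + n)%nat)))
    (Series (fun n => w (a + n)%nat * Re (s (a + n)%nat)),
     Series (fun n => w (a + n)%nat * Im (s (a + n)%nat))).

Section TailVariance.
Variables (w : nat -> R) (s : nat -> C) (a : nat) (C0 : R).
Hypothesis w_nonneg : forall k, 0 <= w k.
Hypothesis w_summable : ex_series (fun n => w (a + n)%nat).
Hypothesis variance_le :
  forall M, rsum a M (fun k => w k * Cmod (s k - wmean w s a M) ^ 2) <= C0.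

Let mass := Series (fun n => w (a + n)%nat).

Lemma wdist_nonneg (z : C) k : 0 <= w k * Cmod (s k - z) ^ 2.
Proof. apply Rmult_le_pos; [apply w_nonneg | apply pow2_ge_0]. Qed.

Lemma C0_nonneg : 0 <= C0.
Proof.
  eapply Rle_trans; [|apply (variance_le a)].
  apply rsum_nonneg; intros; apply wdist_nonneg.
Qed.

Lemma rsum_w_le_mass M : rsum a M w <= mass.
Proof. apply rsum_le_Series; auto. Qed.

(* A single point of positive weight keeps all the finite means bounded. *)
Section PositiveWeight.
Variable k0 : nat.
Hypothesis k0_ge : (a <= k0)%nat.
Hypothesis w_k0_pos : 0 < w k0.

Lemma w_k0_le_rsum M : (k0 <= M)%nat -> w k0 <= rsum a M w.
Proof.
  intros HM; apply rsum_term_le; [intros; apply w_nonneg | split; [exact k0_ge | exact HM]].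
Qed.

Lemma wmean_bounded M : (k0 <= M)%nat ->
  Cmod (wmean w s a M) ^ 2 <= 2 * Cmod (s k0) ^ 2 + 2 * (C0 / w k0).
Proof.
  intros HM; eapply Rle_trans; [apply (Cmod_sq_le_sub (s k0))|].
  apply Rplus_le_compat_l, Rmult_le_compat_l; [lra|].
  apply Rmult_le_reg_l with (w k0); [exact w_k0_pos|].
  replace (w k0 * (C0 / w k0)) with C0 by (field; lra).
  eapply Rle_trans; [|apply (variance_le M)].
  apply (rsum_term_le (fun k => w k * Cmod (s k - wmean w s a M) ^ 2)); [|lia].
  intros; apply wdist_nonneg.
Qed.

Lemma second_moment_bounded_pos M :
  rsum a M (fun k => w k * Cmod (s k) ^ 2)
  <= C0 + mass * (2 * Cmod (s k0) ^ 2 + 2 * (C0 / w k0)).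
Proof.
  assert (Hmoment : forall M, (k0 <= M)%nat -> rsum a M (fun k => w k * Cmod (s k) ^ 2)
      <= C0 + mass * (2 * Cmod (s k0) ^ 2 + 2 * (C0 / w k0))).
  { intros M' HM.
    assert (Hmass : rsum a M' w <> 0) by (pose proof (w_k0_le_rsum M' HM); lra).
    rewrite (rsum_ext _ (fun k => w k * Cmod (s k - 0) ^ 2))
      by (intros; now replace (s k - 0)%C with (s k) by ring).
    rewrite (rsum_wdist_wmean w s a M' Hmass).
    replace (wmean w s a M' - 0)%C with (wmean w s a M') by ring.
    pose proof (variance_le M'); pose proof (wmean_bounded M' HM).
    pose proof (rsum_w_le_mass M'); pose proof (pow2_ge_0 (Cmod (wmean w s a M'))).
    pose proof (rsum_nonneg w a M' (fun k _ => w_nonneg k)).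
    assert (rsum a M' w * Cmod (wmean w s a M') ^ 2
            <= mass * (2 * Cmod (s k0) ^ 2 + 2 * (C0 / w k0))) by
      (apply Rmult_le_compat; lra).
    lra. }
  destruct (le_lt_dec k0 M) as [HM|HM]; [now apply Hmoment|].
  eapply Rle_trans; [apply (rsum_le_r _ a M k0)|apply Hmoment]; try lia.
  intros k _; apply Rmult_le_pos; [apply w_nonneg | apply pow2_ge_0].
Qed.

End PositiveWeight.

Lemma weight_zero_or_pos :
  (forall k, (a <= k)%nat -> w k = 0) \/ (exists k0, (a <= k0)%nat /\ 0 < w k0).
Proof.
  destruct (classic (exists k0, (a <= k0)%nat /\ 0 < w k0)) as [|Hnone]; [now right|left].
  intros k Hk; destruct (w_nonneg k) as [Hpos|]; [|easy].
  exfalso; apply Hnone; now exists k.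
Qed.

Lemma ex_series_second_moment :
  ex_series (fun n => w (a + n)%nat * Cmod (s (a + n)%nat) ^ 2).
Proof.
  assert (Hnonneg : forall k, 0 <= w k * Cmod (s k) ^ 2)
    by (intros; apply Rmult_le_pos; [apply w_nonneg | apply pow2_ge_0]).
  assert (Hbound : exists D, forall M, rsum a M (fun k => w k * Cmod (s k) ^ 2) <= D).
  { destruct weight_zero_or_pos as [Hzero|[k0 [Hk0 Hw0]]].
    - exists 0; intros M; right; rewrite (rsum_ext _ (fun _ => 0)), rsum_const; [ring|].
      intros k Hk; rewrite Hzero by lia; ring.
    - eexists; exact (second_moment_bounded_pos k0 Hk0 Hw0). }
  destruct Hbound as [D HD]; apply (ex_series_nonneg_bounded _ D); [intros; apply Hnonneg|].
  intros n; rewrite <- (rsum_shift (fun k => w k * Cmod (s k) ^ 2)); apply HD.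
Qed.

Lemma ex_series_weighted_part (p : C -> R) : (forall z, Rabs (p z) <= 1 + Cmod z ^ 2) ->
  ex_series (fun n => w (a + n)%nat * p (s (a + n)%nat)).
Proof.
  intros Hp.
  apply (ex_series_le (V := R_CompleteNormedModule) _
           (fun n => w (a + n)%nat + w (a + n)%nat * Cmod (s (a + n)%nat) ^ 2)).
  - intros n; change (norm ?x) with (Rabs x).
    rewrite Rabs_mult, (Rabs_right (w _)) by (apply Rle_ge, w_nonneg).
    pose proof (Hp (s (a + n)%nat)); pose proof (w_nonneg (a + n)%nat); nra.
  - apply (ex_series_plus (V := R_NormedModule));
      [exact w_summable | exact ex_series_second_moment].
Qed.

Lemma ex_series_wRe : ex_series (fun n => w (a + n)%nat * Re (s (a + n)%nat)).
Proof. apply ex_series_weighted_part, Rabs_Re_le. Qed.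

Lemma ex_series_wIm : ex_series (fun n => w (a + n)%nat * Im (s (a + n)%nat)).
Proof. apply ex_series_weighted_part, Rabs_Im_le. Qed.

Lemma wmean_defect_lim k0 : (a <= k0)%nat -> 0 < w k0 ->
  is_lim_seq (fun n => rsum a (a + n) w * Cmod (wmean w s a (a + n) - tail_wmean w s a) ^ 2) 0.
Proof.
  intros Hk0 Hw0.
  set (m := tail_wmean w s a).
  set (Sx := Series (fun n => w (a + n)%nat * Re (s (a + n)%nat))).
  set (Sy := Series (fun n => w (a + n)%nat * Im (s (a + n)%nat))).
  set (mass_n := sum_n (fun i => w (a + i)%nat)).
  set (dX := fun n => sum_n (fun i => w (a + i)%nat * Re (s (a + i)%nat)) n - Re m * mass_n n).
  set (dY := fun n => sum_n (fun i => w (a + i)%nat * Im (s (a + i)%nat)) n - Im m * mass_n n).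
  apply (is_lim_seq_ext_loc (fun n => (dX n * dX n + dY n * dY n) / mass_n n)).
  { exists k0; intros n Hn.
    assert (Hmass_n : rsum a (a + n) w <> 0)
      by (pose proof (w_k0_le_rsum k0 Hk0 (a + n) ltac:(lia)); lra).
    unfold dX, dY, mass_n.
    rewrite <- (rsum_shift (fun k => w k * Re (s k))), <- (rsum_shift (fun k => w k * Im (s k))),
      <- (rsum_shift w).
    rewrite Cmod_sq_sub; unfold wmean; rewrite re_scal_l, im_scal_l, Re_wmoment, Im_wmoment.
    field; exact Hmass_n. }
  assert (Hmass : 0 < mass)
    by (pose proof (w_k0_le_rsum k0 Hk0 k0 (le_n _)); pose proof (rsum_w_le_mass k0); lra).
  assert (Hmass_lim : is_lim_seq mass_n mass) by exact (Series_correct _ w_summable).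
  assert (HdX : is_lim_seq dX (Sx - Re m * mass)).
  { apply is_lim_seq_minus'; [exact (Series_correct _ ex_series_wRe)|].
    apply (is_lim_seq_mult' (fun _ => Re m)); [apply is_lim_seq_const | exact Hmass_lim]. }
  assert (HdY : is_lim_seq dY (Sy - Im m * mass)).
  { apply is_lim_seq_minus'; [exact (Series_correct _ ex_series_wIm)|].
    apply (is_lim_seq_mult' (fun _ => Im m)); [apply is_lim_seq_const | exact Hmass_lim]. }
  replace 0 with (((Sx - Re m * mass) * (Sx - Re m * mass)
                   + (Sy - Im m * mass) * (Sy - Im m * mass)) / mass).
  - apply is_lim_seq_div'; [|exact Hmass_lim|lra].
    apply is_lim_seq_plus'; now apply is_lim_seq_mult'.
  - unfold m, tail_wmean; rewrite re_scal_l, im_scal_l; simpl; fold mass Sx Sy; field; lra.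
Qed.

(* By Steiner's identity the variance about the tail mean over [a, a + n] exceeds the
   variance about the finite mean, which is at most [C0], by a defect tending to [0]. *)
Lemma tail_variance_le M0 :
  rsum a M0 (fun k => w k * Cmod (s k - tail_wmean w s a) ^ 2) <= C0.
Proof.
  destruct weight_zero_or_pos as [Hzero|[k0 [Hk0 Hw0]]].
  { rewrite (rsum_ext _ (fun _ => 0)), rsum_const; [pose proof C0_nonneg; lra|].
    intros k Hk; rewrite Hzero by lia; ring. }
  set (m := tail_wmean w s a).
  assert (Hle : Rbar_le (rsum a M0 (fun k => w k * Cmod (s k - m) ^ 2)) (C0 + 0)).
  { apply (is_lim_seq_le_loc (fun _ => rsum a M0 (fun k => w k * Cmod (s k - m) ^ 2))
             (fun n => C0 + rsum a (a + n) w * Cmod (wmean w s a (a + n) - m) ^ 2)).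
    - exists (M0 + k0)%nat; intros n Hn.
      assert (Hmass_n : rsum a (a + n) w <> 0)
        by (pose proof (w_k0_le_rsum k0 Hk0 (a + n) ltac:(lia)); lra).
      eapply Rle_trans; [apply (rsum_le_r _ a M0 (a + n)); [intros; apply wdist_nonneg | lia]|].
      rewrite (rsum_wdist_wmean w s a (a + n) Hmass_n).
      apply Rplus_le_compat_r, variance_le.
    - apply is_lim_seq_const.
    - apply is_lim_seq_plus'; [apply is_lim_seq_const | exact (wmean_defect_lim k0 Hk0 Hw0)]. }
  cbn [Rbar_le] in Hle; lra.
Qed.

End TailVariance.

Definition tail_summable (alpha : nat -> C) (a : nat) (f : nat -> C) : Prop :=
  ex_series (fun n => weight alpha (a + n)%nat * Re (csum a (a + n) f)) /\
  ex_series (fun n => weight alpha (a + n)%nat * Im (csum a (a + n) f)).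

Definition tail_mean (alpha : nat -> C) (a : nat) (f : nat -> C) : C :=
  tail_wmean (weight alpha) (fun k => csum a k f) a.

Section TailBlock.
Variables (alpha f : nat -> C) (eps : R) (a : nat).
Hypothesis alpha_l2 : ell2 alpha.
Hypothesis f_l2 : ell2 f.
Hypothesis eps_nonneg : 0 <= eps.
Hypothesis tail_L : forall M, (a <= M)%nat -> L_I alpha a M <= eps.

Let tail_norm2 := Series (fun n => Cmod (f (a + n)%nat) ^ 2).

Lemma weight_tail_summable : ex_series (fun n => weight alpha (a + n)%nat).
Proof. exact (proj1 (ex_series_incr_n (weight alpha) a) alpha_l2). Qed.

Lemma rsum_le_tail_norm2 M : rsum a M (fun k => Cmod (f k) ^ 2) <= tail_norm2.
Proof.
  apply rsum_le_Series; [intros; apply pow2_ge_0|].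
  exact (proj1 (ex_series_incr_n (fun k => Cmod (f k) ^ 2) a) f_l2).
Qed.

Lemma window_variance_le M :
  rsum a M (fun k => weight alpha k * Cmod (csum a k f - block_mean alpha a M f) ^ 2)
  <= eps ^ 2 / 2 * tail_norm2.
Proof.
  assert (0 <= eps ^ 2 / 2) by (pose proof (pow2_ge_0 eps); lra).
  destruct (le_lt_dec a M) as [HM|HM].
  - eapply Rle_trans; [apply (block_variance_le alpha eps a M f eps_nonneg (tail_L M HM))|].
    apply Rmult_le_compat_l; [assumption | apply rsum_le_tail_norm2].
  - rewrite rsum_empty by exact HM.
    pose proof (rsum_le_tail_norm2 M); rewrite rsum_empty in * by exact HM; nra.
Qed.

Lemma tail_mean_summable : tail_summable alpha a f.
Proof.
  split; [apply (ex_series_wRe _ (fun k => csum a k f) a (eps ^ 2 / 2 * tail_norm2))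
         | apply (ex_series_wIm _ (fun k => csum a k f) a (eps ^ 2 / 2 * tail_norm2))];
    first [exact (weight_nonneg alpha) | exact weight_tail_summable | exact window_variance_le].
Qed.

Lemma tail_mean_variance_le M :
  rsum a M (fun k => weight alpha k * Cmod (csum a k f - tail_mean alpha a f) ^ 2)
  <= eps ^ 2 / 2 * tail_norm2.
Proof.
  exact (tail_variance_le _ (fun k => csum a k f) a _ (weight_nonneg alpha) weight_tail_summable
           window_variance_le M).
Qed.

End TailBlock.

Lemma tail_mean_plus alpha a f g : tail_summable alpha a f -> tail_summable alpha a g ->
  tail_mean alpha a (fun j => f j + g j)%C = (tail_mean alpha a f + tail_mean alpha a g)%C.
Proof.
  intros [Hfx Hfy] [Hgx Hgy]; unfold tail_mean, tail_wmean; cbv beta.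
  rewrite (Series_ext
             (fun n => weight alpha (a + n)%nat * Re (csum a (a + n) (fun j => f j + g j)%C))
             (fun n => 1 * (weight alpha (a + n)%nat * Re (csum a (a + n) f))
                       + 1 * (weight alpha (a + n)%nat * Re (csum a (a + n) g))))
    by (intros; rewrite csum_plus, re_plus; ring).
  rewrite (Series_ext
             (fun n => weight alpha (a + n)%nat * Im (csum a (a + n) (fun j => f j + g j)%C))
             (fun n => 1 * (weight alpha (a + n)%nat * Im (csum a (a + n) f))
                       + 1 * (weight alpha (a + n)%nat * Im (csum a (a + n) g))))
    by (intros; rewrite csum_plus, im_plus; ring).
  rewrite !Series_lin2 by assumption.
  apply injective_projections; simpl; ring.
Qed.

Lemma tail_mean_scal alpha a (z : C) f : tail_summable alpha a f ->
  tail_mean alpha a (fun j => z * f j)%C = (z * tail_mean alpha a f)%C.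
Proof.
  intros [Hfx Hfy]; unfold tail_mean, tail_wmean; cbv beta.
  rewrite (Series_ext
             (fun n => weight alpha (a + n)%nat * Re (csum a (a + n) (fun j => z * f j)%C))
             (fun n => Re z * (weight alpha (a + n)%nat * Re (csum a (a + n) f))
                       + - Im z * (weight alpha (a + n)%nat * Im (csum a (a + n) f))))
    by (intros; rewrite csum_scal, re_mult; ring).
  rewrite (Series_ext
             (fun n => weight alpha (a + n)%nat * Im (csum a (a + n) (fun j => z * f j)%C))
             (fun n => Re z * (weight alpha (a + n)%nat * Im (csum a (a + n) f))
                       + Im z * (weight alpha (a + n)%nat * Re (csum a (a + n) f))))
    by (intros; rewrite csum_scal, im_mult; ring).
  rewrite !Series_lin2 by assumption.
  apply injective_projections; unfold Re, Im; simpl; ring.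
Qed.

(** * The partition into pieces *)

Fixpoint block_index (c : nat -> nat) (n k : nat) : nat :=
  match n with
  | O => O
  | S m => if c (S m) <=? k then S m else block_index c m k
  end.

Section Partition.
Variables (c : nat -> nat) (N : nat).
Hypothesis c_incr : forall j, (j < N)%nat -> (c j < c (S j))%nat.

Lemma incr_le i j : (i <= j <= N)%nat -> (c i <= c j)%nat.
Proof.
  intros [Hij HjN]; induction Hij as [|j Hij IH]; [lia|].
  pose proof (c_incr j ltac:(lia)); specialize (IH ltac:(lia)); lia.
Qed.

Lemma block_index_le n k : (block_index c n k <= n)%nat.
Proof. induction n as [|n IH]; simpl; [lia | destruct (c (S n) <=? k); lia]. Qed.

Lemma block_index_spec n j k : (n <= N)%nat -> (j <= n)%nat -> (c j <= k)%nat ->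
  ((j < n)%nat -> (k < c (S j))%nat) -> block_index c n k = j.
Proof.
  induction n as [|n IH]; intros HnN Hjn Hjk Hnext; simpl; [lia|].
  destruct (Nat.leb_spec (c (S n)) k) as [Hle|Hgt].
  - destruct (Nat.eq_dec j (S n)) as [->|Hne]; [reflexivity|].
    pose proof (incr_le (S j) (S n) ltac:(lia)); specialize (Hnext ltac:(lia)); lia.
  - assert (j <> S n) by (intros ->; lia).
    apply IH; try lia; intros Hjn'; apply Hnext; lia.
Qed.

(* Pieces [2j] and [2j+1] are block [j] without its last point and that last point;
   piece [2N] is the tail [c N, oo). *)
Definition piece (k : nat) : nat :=
  let j := block_index c N k in
  if j =? N then (2 * N)%nat else if S k =? c (S j) then (2 * j + 1)%nat else (2 * j)%nat.

Lemma piece_le k : (piece k <= 2 * N)%nat.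
Proof.
  unfold piece; pose proof (block_index_le N k).
  destruct (Nat.eqb_spec (block_index c N k) N); [lia|].
  destruct (S k =? c (S (block_index c N k))); lia.
Qed.

Lemma piece_block j k : (j < N)%nat -> (c j <= k < c (S j))%nat ->
  piece k = if S k =? c (S j) then (2 * j + 1)%nat else (2 * j)%nat.
Proof.
  intros HjN Hk; unfold piece; rewrite (block_index_spec N j k) by (auto; lia).
  destruct (Nat.eqb_spec j N); [lia | reflexivity].
Qed.

Lemma piece_tail k : (c N <= k)%nat -> piece k = (2 * N)%nat.
Proof.
  intros Hk; unfold piece; rewrite (block_index_spec N N k) by (auto; lia).
  now rewrite Nat.eqb_refl.
Qed.

End Partition.

Lemma ell2_zero : ell2 (fun _ => RtoC 0) /\ norm2 (fun _ => RtoC 0) <= 1.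
Proof.
  assert (Hsum : forall n, sum_n (fun k => Cmod (RtoC 0) ^ 2) n <= 0).
  { intros n; rewrite <- (rsum_shift (fun k => Cmod (RtoC 0) ^ 2) 0 n), Cmod_0, rsum_const.
    simpl; lra. }
  split.
  - apply (ex_series_nonneg_bounded _ 0); [intros; apply pow2_ge_0 | exact Hsum].
  - unfold norm2; rewrite <- sqrt_1; apply sqrt_le_1_alt.
    pose proof (Series_le_bound _ 0 (fun k => pow2_ge_0 _) Hsum); lra.
Qed.

Lemma opnorm_le (T : (nat -> C) -> (nat -> C)) (B : R) : 0 <= B ->
  (forall f, ell2 f -> norm2 (T f) <= B * norm2 f) ->
  exists r, opnorm T = Finite r /\ r <= B.
Proof.
  intros HB HT; unfold opnorm.
  match goal with |- context [Lub_Rbar ?E] => set (Eset := E) end.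
  destruct (Lub_Rbar_correct Eset) as [Hub Hleast].
  assert (Hup : Rbar_le (Lub_Rbar Eset) B).
  { apply Hleast; intros x [g [Hg [Hn ->]]]; cbn [Rbar_le].
    eapply Rle_trans; [apply HT, Hg|].
    pose proof (sqrt_pos (Series (fun k => Cmod (g k) ^ 2))); unfold norm2 in *; nra. }
  assert (Hlow : Rbar_le (norm2 (T (fun _ => RtoC 0))) (Lub_Rbar Eset)).
  { apply Hub; exists (fun _ => RtoC 0); destruct ell2_zero; auto. }
  destruct (Lub_Rbar Eset) as [r| |]; cbn [Rbar_le] in Hup, Hlow; try contradiction.
  now exists r.
Qed.

Lemma approx_num_le (T P : (nat -> C) -> (nat -> C)) (m : nat) (r : R) :
  linear_l2 P -> rank_le P (pred m) -> opnorm (op_sub T P) = Finite r ->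
  Rbar_le (approx_num T m) r.
Proof.
  intros HP Hrank Hnorm; unfold approx_num.
  match goal with |- context [Glb_Rbar ?E] => destruct (Glb_Rbar_correct E) as [Hlb _] end.
  apply Hlb; now exists P.
Qed.

(** * The approximating operator *)

Section Approximant.
Variables (alpha : nat -> C) (eps : R) (N : nat) (c : nat -> nat).
Hypothesis alpha_l2 : ell2 alpha.
Hypothesis eps_nonneg : 0 <= eps.
Hypothesis c_zero : c 0%nat = 0%nat.
Hypothesis c_incr : forall j, (j < N)%nat -> (c j < c (S j))%nat.
Hypothesis block_L : forall j t, (j < N)%nat -> (c j < t < c (S j))%nat ->
  L_I alpha (c j) (t - 1) <= eps.
Hypothesis tail_L : forall M, (c N <= M)%nat -> L_I alpha (c N) M <= eps.

Definition coef (i : nat) (f : nat -> C) : C :=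
  if i =? 2 * N then (csum_lt f (c N) + tail_mean alpha (c N) f)%C
  else if Nat.odd i then csum_lt f (c (S (Nat.div2 i)))
  else (csum_lt f (c (Nat.div2 i))
        + block_mean alpha (c (Nat.div2 i)) (c (S (Nat.div2 i)) - 2) f)%C.

Definition piece_vec (i k : nat) : C := if piece c N k =? i then alpha k else RtoC 0.

(* Written in the form required by [rank_le], with the vectors [piece_vec i]. *)
Definition approx (f : nat -> C) (k : nat) : C :=
  csum 0 (2 * N)
    (fun i => if Nat.ltb i (S (2 * N)) then Cmult (coef i f) (piece_vec i k) else RtoC 0).

Lemma approx_eq f k : approx f k = (coef (piece c N k) f * alpha k)%C.
Proof.
  unfold approx; rewrite <- (csum_indicator (2 * N) (piece c N k)) by apply piece_le.
  apply csum_ext; intros i Hi.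
  replace (Nat.ltb i (S (2 * N))) with true by (symmetry; apply Nat.ltb_lt; lia).
  unfold piece_vec; destruct (Nat.eqb_spec (piece c N k) i), (Nat.eqb_spec i (piece c N k));
    subst; try lia; ring.
Qed.

Lemma approx_error f k :
  (R_op alpha f k - approx f k)%C = (alpha k * (csum 0 k f - coef (piece c N k) f))%C.
Proof. rewrite approx_eq; unfold R_op; ring. Qed.

Lemma approx_error_inner f j k : (j < N)%nat -> (c j <= k)%nat -> (S k < c (S j))%nat ->
  (R_op alpha f k - approx f k)%C
  = (alpha k * (csum (c j) k f - block_mean alpha (c j) (c (S j) - 2) f))%C.
Proof.
  intros HjN Hjk Hk; rewrite approx_error, (piece_block c N c_incr j k) by (auto; lia).
  destruct (Nat.eqb_spec (S k) (c (S j))); [lia|].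
  unfold coef; destruct (Nat.eqb_spec (2 * j) (2 * N)); [lia|].
  rewrite Nat.odd_even, Nat.div2_double, (csum_lt_split f (c j) k) by lia; ring.
Qed.

Lemma approx_error_last f j : (j < N)%nat ->
  (R_op alpha f (c (S j) - 1) - approx f (c (S j) - 1))%C = RtoC 0.
Proof.
  intros HjN; pose proof (c_incr j HjN).
  rewrite approx_error, (piece_block c N c_incr j) by (auto; lia).
  replace (S (c (S j) - 1)) with (c (S j)) by lia; rewrite Nat.eqb_refl.
  unfold coef; destruct (Nat.eqb_spec (2 * j + 1) (2 * N)); [lia|].
  replace (2 * j + 1)%nat with (S (2 * j)) by lia; rewrite Nat.odd_succ, Nat.even_even,
    Nat.div2_succ_double.
  destruct (c (S j)) as [|m] eqn:E; [lia|]; simpl; replace (m - 0)%nat with m by lia; ring.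
Qed.

Lemma approx_error_tail f k : (c N <= k)%nat ->
  (R_op alpha f k - approx f k)%C = (alpha k * (csum (c N) k f - tail_mean alpha (c N) f))%C.
Proof.
  intros Hk; rewrite approx_error, (piece_tail c N c_incr k Hk); unfold coef; rewrite Nat.eqb_refl.
  rewrite (csum_lt_split f (c N) k) by lia; ring.
Qed.

Lemma coef_plus f g : ell2 f -> ell2 g -> forall i,
  coef i (fun j => f j + g j)%C = (coef i f + coef i g)%C.
Proof.
  intros Hf Hg i; unfold coef.
  destruct (i =? 2 * N).
  - rewrite csum_lt_plus, tail_mean_plus by (now apply (tail_mean_summable _ _ eps)); ring.
  - destruct (Nat.odd i); [apply csum_lt_plus|].
    rewrite csum_lt_plus, block_mean_plus; ring.
Qed.

Lemma coef_scal (z : C) f : ell2 f -> forall i,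
  coef i (fun j => z * f j)%C = (z * coef i f)%C.
Proof.
  intros Hf i; unfold coef.
  destruct (i =? 2 * N).
  - rewrite csum_lt_scal, tail_mean_scal by (now apply (tail_mean_summable _ _ eps)); ring.
  - destruct (Nat.odd i); [apply csum_lt_scal|].
    rewrite csum_lt_scal, block_mean_scal; ring.
Qed.

Lemma ell2_of_weight_bound (h : nat -> C) (K : R) :
  (forall k, Cmod (h k) ^ 2 <= K * weight alpha k) -> ell2 h.
Proof.
  intros Hh; apply (ex_series_le (V := R_CompleteNormedModule) _ (fun k => K * weight alpha k)).
  - intros k; change (norm ?x) with (Rabs x); rewrite Rabs_right by (apply Rle_ge, pow2_ge_0).
    apply Hh.
  - exact (ex_series_scal_l K (weight alpha) alpha_l2).
Qed.

Lemma approx_linear : linear_l2 approx.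
Proof.
  split; [|split].
  - intros f Hf; apply (ell2_of_weight_bound _ (rsum 0 (2 * N) (fun i => Cmod (coef i f) ^ 2))).
    intros k; rewrite approx_eq, Cmod_mult_sq; apply Rmult_le_compat_r; [apply pow2_ge_0|].
    apply (rsum_term_le (fun i => Cmod (coef i f) ^ 2)); [intros; apply pow2_ge_0|].
    pose proof (piece_le c N k); lia.
  - intros f g Hf Hg k; rewrite !approx_eq, coef_plus by assumption; ring.
  - intros z f Hf k; rewrite !approx_eq, coef_scal by assumption; ring.
Qed.

Lemma approx_rank : rank_le approx (pred (2 * N + 2)).
Proof.
  replace (pred (2 * N + 2)) with (S (2 * N)) by lia.
  exists piece_vec; split.
  - intros i _; apply (ell2_of_weight_bound _ 1); intros k; unfold piece_vec.
    destruct (piece c N k =? i); [unfold weight; lra|].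
    rewrite Cmod_0; pose proof (weight_nonneg alpha k); simpl; lra.
  - intros f _; exists (fun i => coef i f); reflexivity.
Qed.

Section ErrorBound.
Variable f : nat -> C.
Hypothesis f_l2 : ell2 f.

Let G (k : nat) : R := Cmod (op_sub (R_op alpha) approx f k) ^ 2.
Let F (k : nat) : R := Cmod (f k) ^ 2.
Let K : R := eps ^ 2 / 2.

Lemma block_error_le j : (j < N)%nat ->
  rsum (c j) (c (S j) - 1) G <= K * rsum (c j) (c (S j) - 1) F.
Proof.
  intros HjN; pose proof (c_incr j HjN).
  assert (HK : 0 <= K) by (unfold K; pose proof (pow2_ge_0 eps); lra).
  assert (Hlast : G (c (S j) - 1) = 0)
    by (unfold G, op_sub; rewrite approx_error_last, Cmod_0 by exact HjN; ring).
  destruct (Nat.eq_dec (c (S j)) (S (c j))) as [Hone|Hlong].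
  - rewrite Hone, Nat.sub_succ, Nat.sub_0_r in Hlast |- *; rewrite !rsum_single, Hlast.
    apply Rmult_le_pos; [exact HK | apply pow2_ge_0].
  - set (b := (c (S j) - 2)%nat).
    rewrite (rsum_split G (c j) b), (rsum_split F (c j) b) by (unfold b; lia).
    replace (S b) with (c (S j) - 1)%nat by (unfold b; lia).
    rewrite !rsum_single, Hlast.
    rewrite (rsum_ext G (fun k => weight alpha k
                                  * Cmod (csum (c j) k f - block_mean alpha (c j) b f) ^ 2)).
    + assert (HL : L_I alpha (c j) b <= eps).
      { replace b with (S b - 1)%nat by lia; apply block_L; unfold b; lia. }
      pose proof (block_variance_le alpha eps (c j) b f eps_nonneg HL) as Hvar.
      assert (0 <= F (c (S j) - 1)) by apply pow2_ge_0.
      unfold K, F in *; nra.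
    + intros k Hk; unfold G, op_sub; rewrite (approx_error_inner f j k) by (unfold b in Hk; lia).
      apply Cmod_mult_sq.
Qed.

Lemma prefix_error_le j : (j <= N)%nat -> rsum_lt G (c j) <= K * rsum_lt F (c j).
Proof.
  induction j as [|j IH]; intros HjN; [rewrite c_zero; simpl; lra|].
  pose proof (c_incr j HjN).
  replace (c (S j)) with (S (c (S j) - 1)) by lia.
  rewrite (rsum_lt_split G (c j)), (rsum_lt_split F (c j)) by lia.
  pose proof (block_error_le j HjN); specialize (IH ltac:(lia)); lra.
Qed.

Lemma partial_error_le n : rsum 0 n G <= K * Series F.
Proof.
  assert (HK : 0 <= K) by (unfold K; pose proof (pow2_ge_0 eps); lra).
  assert (Hsplit := rsum_lt_add_Series F (c N) f_l2).
  assert (Htail : 0 <= Series (fun n => F (c N + n)%nat)).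
  { apply Series_nonneg; [intros; apply pow2_ge_0|].
    exact (proj1 (ex_series_incr_n F (c N)) f_l2). }
  pose proof (prefix_error_le N (le_n _)) as Hprefix.
  assert (HG : forall a b, 0 <= rsum a b G) by (intros; apply rsum_nonneg; intros; apply pow2_ge_0).
  destruct (le_lt_dec (S n) (c N)) as [Hn|Hn].
  - assert (Hmono : rsum_lt G (S n) <= rsum_lt G (c N)).
    { replace (c N) with (S (c N - 1))%nat by lia.
      rewrite (rsum_lt_split G (S n) (c N - 1)) by lia.
      pose proof (HG (S n) (c N - 1)%nat); lra. }
    change (rsum 0 n G) with (rsum_lt G (S n)); nra.
  - change (rsum 0 n G) with (rsum_lt G (S n)); rewrite (rsum_lt_split G (c N)) by lia.
    assert (Htail_error : rsum (c N) n G <= K * Series (fun n => F (c N + n)%nat)).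
    { rewrite (rsum_ext G (fun k => weight alpha k
                                    * Cmod (csum (c N) k f - tail_mean alpha (c N) f) ^ 2)).
      - exact (tail_mean_variance_le alpha f eps (c N) alpha_l2 f_l2 eps_nonneg tail_L n).
      - intros k Hk; unfold G, op_sub; rewrite approx_error_tail by lia; apply Cmod_mult_sq. }
    nra.
Qed.

Lemma approx_error_norm_le : norm2 (op_sub (R_op alpha) approx f) <= eps / sqrt 2 * norm2 f.
Proof.
  assert (HGF : Series G <= K * Series F).
  { apply Series_le_bound; [intros; apply pow2_ge_0|].
    intros n; rewrite <- rsum_sum_n; apply partial_error_le. }
  unfold norm2; fold G F.
  replace (eps / sqrt 2) with (sqrt K)
    by (unfold K; rewrite sqrt_div_alt, sqrt_pow2 by lra; reflexivity).
  rewrite <- sqrt_mult_alt by (unfold K; pose proof (pow2_ge_0 eps); lra).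
  now apply sqrt_le_1_alt.
Qed.

End ErrorBound.
End Approximant.

Theorem lemma4p2 (alpha : nat -> C) (eps : R) (N : nat) :
  ell2 alpha -> 0 < eps -> epsL_finite_length alpha eps N ->
  Rbar_le (approx_num (R_op alpha) (2 * N + 2)) (Finite (eps / sqrt 2)).
Proof.
  intros Halpha Heps [c [Hc0 [Hstep Htail]]].
  assert (Heps0 : 0 <= eps) by lra.
  assert (Hincr : forall j, (j < N)%nat -> (c j < c (S j))%nat) by (intros j Hj; apply Hstep, Hj).
  assert (Hblock : forall j t, (j < N)%nat -> (c j < t < c (S j))%nat ->
                     L_I alpha (c j) (t - 1) <= eps)
    by (intros j t Hj Ht; apply Rnot_gt_le, (proj2 (proj2 (Hstep j Hj))), Ht).
  assert (Htail_le : forall M, (c N <= M)%nat -> L_I alpha (c N) M <= eps).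
  { intros M HM; apply Rnot_gt_le; replace M with (S M - 1)%nat by lia; apply Htail; lia. }
  destruct (opnorm_le (op_sub (R_op alpha) (approx alpha N c)) (eps / sqrt 2))
    as [r [Hr Hle]].
  - apply Rdiv_le_0_compat; [exact Heps0 | apply sqrt_lt_R0; lra].
  - intros f Hf; now apply approx_error_norm_le.
  - eapply Rbar_le_trans; [apply (approx_num_le _ (approx alpha N c) _ r)|exact Hle].
    + now apply (approx_linear alpha eps).
    + now apply approx_rank.
    + exact Hr.
Qed.
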